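(* Let $d\ge2$ and let $v=(v_1,\dots,v_d)\in\mathbb{R}^d$ satisfy $\sum_j v_j=1$ and $\sum_j v_j^2=d$. Let $v_{\max}=\max_j v_j$ and $v_{\min}=\min_j v_j$. Then $$\frac{(d-1)v_{\max}-(d+1)v_{\min}}{2}\le\frac{d-1}{\sqrt2\,d}\sqrt{(d+1)(d^2+d+2)}-\frac1d,$$ with equality if and only if the components of $v$ in nonincreasing order $v^\downarrow$ satisfy, with $s=\sqrt{\frac{d+1}{2(d^2+d+2)}}$, $$v^\downarrow_1=\frac1d+\frac{d^2-d+2}{d}s,\quad v^\downarrow_2=\dots=v^\downarrow_{d-1}=\frac1d+\frac2d s,\quad v^\downarrow_d=\frac1d-\frac{d^2+d-2}{d}s.$$ *)

From mathcomp Require Import all_boot all_order all_algebra all_fingroup.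
Set Implicit Arguments. Unset Strict Implicit. Unset Printing Implicit Defensive.
Import Order.TTheory GRing.Theory Num.Theory.
Local Open Scope ring_scope.

Definition is_max_of (R : realFieldType) (d : nat) (v : 'I_d -> R) (m : R) : Prop :=
  (exists i, v i = m) /\ (forall j, v j <= m).

Definition is_min_of (R : realFieldType) (d : nat) (v : 'I_d -> R) (m : R) : Prop :=
  (exists i, v i = m) /\ (forall j, m <= v j).

Definition is_decr_rearr (R : realFieldType) (d : nat) (v w : 'I_d -> R) : Prop :=
  (exists sigma : 'S_d, forall i, w i = v (sigma i)) /\
  (forall i j : 'I_d, (i <= j)%N -> w j <= w i).

From mathcomp Require Import all_boot all_order all_algebra all_fingroup.
From mathcomp Require Import ring lra.
Set Implicit Arguments. Unset Strict Implicit. Unset Printing Implicit Defensive.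
Import Order.TTheory GRing.Theory Num.Theory.
Local Open Scope ring_scope.

(* Let p = (1 + 2s)/d, the common value of the middle coordinates of the extremal
   vector.  The two moment conditions give  sum_j (v_j - p)^2 = d - 2p + d p^2,
   and completing squares against the constraint 2 (d^2 + d + 2) s^2 = d + 1 yields
     (v_max - p - (d-1)s)^2 + (v_min - p + (d+1)s)^2 + sum_{j <> max, min} (v_j - p)^2
       = 4 s (bound - ((d-1) v_max - (d+1) v_min)/2).
   Hence the inequality, and equality forces v_max = p + (d-1)s, v_min = p - (d+1)s
   and all other coordinates equal to p, which determines the decreasing
   rearrangement. *)

Lemma bigD1_pair (R : Type) (idx : R) (op : Monoid.com_law idx)
    (I : finType) (i j : I) (F : I -> R) : i != j ->
  \big[op/idx]_k F k = op (op (F i) (F j)) (\big[op/idx]_(k | (k != i) && (k != j)) F k).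
Proof.
move=> ij; rewrite (bigD1 i) //= (bigD1 j) ?(eq_sym j) //= Monoid.mulmA //.
Qed.

Lemma sumr_sqr_subr (R : comPzRingType) (n : nat) (v : 'I_n -> R) (c : R) :
  \sum_(k < n) (v k - c) ^+ 2 =
  \sum_(k < n) v k ^+ 2 - 2 * c * \sum_(k < n) v k + n%:R * c ^+ 2.
Proof.
have -> : n%:R * c ^+ 2 = \sum_(k < n) c ^+ 2 by rewrite sumr_const card_ord mulr_natl.
rewrite mulr_sumr -sumrB -big_split /=.
by apply: eq_bigr => k _; ring.
Qed.

Section ExtremeSpread.

Variables (R : realFieldType) (d : nat) (v : 'I_d -> R) (s : R).

Local Notation dd := (d%:R : R).
Local Notation q := (dd ^+ 2 + dd + 2).
Local Notation p := ((1 + 2 * s) / dd).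
Local Notation spread a b := (((dd - 1) * a - (dd + 1) * b) / 2).
Local Notation bound := (((dd - 1) * s * q - 1) / dd).

Hypotheses (hd : (2 <= d)%N) (hsum : \sum_(k < d) v k = 1)
  (hsq : \sum_(k < d) v k ^+ 2 = dd) (hs : 2 * q * s ^+ 2 = dd + 1) (hs0 : 0 < s).

Lemma spread_sos (i j : 'I_d) : i != j ->
  (v i - p - (dd - 1) * s) ^+ 2 + (v j - p + (dd + 1) * s) ^+ 2
    + \sum_(k | (k != i) && (k != j)) (v k - p) ^+ 2
  = 4 * s * (bound - spread (v i) (v j)).
Proof.
move=> ij; have dd0 : dd != 0 by rewrite pnatr_eq0 gtn_eqF // ltnW.
set M := \sum_(k | _) _.
have -> : M = dd - 2 * p + dd * p ^+ 2 - (v i - p) ^+ 2 - (v j - p) ^+ 2.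
  have := sumr_sqr_subr v p; rewrite (bigD1_pair _ _ ij) /= hsum hsq mulr1 => hv.
  by apply: (addrI ((v i - p) ^+ 2 + (v j - p) ^+ 2)); rewrite hv; ring.
apply/eqP; rewrite -subr_eq0; apply/eqP.
transitivity ((dd - 1) * (dd + 1 - 2 * q * s ^+ 2) / dd); first by field.
by rewrite hs subrr mulr0 mul0r.
Qed.

Lemma spread_le_bound (i j : 'I_d) : i != j -> spread (v i) (v j) <= bound.
Proof.
move=> ij; have := spread_sos ij; set S := _ + _ + _ => hS.
have S_ge0 : 0 <= S by rewrite !addr_ge0 ?sumr_ge0 // => *; exact: sqr_ge0.
by move: S_ge0; rewrite hS pmulr_rge0 ?subr_ge0 ?mulr_gt0.
Qed.

Lemma spread_eq_bound (i j : 'I_d) : i != j -> spread (v i) (v j) = bound ->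
  [/\ v i = p + (dd - 1) * s, v j = p - (dd + 1) * s
    & forall k, k != i -> k != j -> v k = p].
Proof.
move=> ij eq_b; have := spread_sos ij; rewrite eq_b subrr mulr0.
set a := _ ^+ 2; set b := _ ^+ 2; set M := \sum_(k | _) _ => hS.
have a_ge0 : 0 <= a by exact: sqr_ge0.
have b_ge0 : 0 <= b by exact: sqr_ge0.
have M_ge0 : 0 <= M by apply: sumr_ge0 => k _; exact: sqr_ge0.
have /eqP : a = 0 by lra.
rewrite sqrf_eq0 subr_eq0 subr_eq => /eqP ->.
have /eqP : b = 0 by lra.
rewrite sqrf_eq0 addr_eq0 subr_eq => /eqP ->.
have M0 : M = 0 by lra.
split=> [||k ki kj]; [ring | ring |].
have /psumr_eq0P/(_ k) := M0; rewrite ki kj => /(_ (fun _ _ => sqr_ge0 _) isT).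
by move/eqP; rewrite sqrf_eq0 subr_eq0 => /eqP.
Qed.

End ExtremeSpread.

Lemma argmax_neq_argmin (R : realFieldType) (d : nat) (v : 'I_d -> R) (i j : 'I_d) :
  (2 <= d)%N -> \sum_(k < d) v k = 1 -> \sum_(k < d) v k ^+ 2 = d%:R ->
  (forall k, v k <= v i) -> (forall k, v j <= v k) -> i != j.
Proof.
move=> hd hsum hsq vi vj; apply/eqP => ij; subst j.
have vk k : v k = v i by apply/le_anti; rewrite vi vj.
have d_vi : d%:R * v i = 1.
  by rewrite mulr_natl -hsum (eq_bigr _ (fun k _ => vk k)) sumr_const card_ord.
have d_vi2 : d%:R * v i ^+ 2 = d%:R.
  by rewrite mulr_natl -hsq (eq_bigr _ (fun k _ => congr1 (fun x => x ^+ 2) (vk k)))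
             sumr_const card_ord.
have : 2 <= d%:R :> R by rewrite (ler_nat R 2 d).
nra.
Qed.

Section DecreasingRearrangement.

Variables (R : realFieldType) (d : nat) (v : 'I_d -> R).

Lemma decr_rearr_exists : exists w, is_decr_rearr v w.
Proof.
pose ge_R := fun x y : R => y <= x.
have ge_total : total ge_R by move=> x y; exact: le_total.
have ge_trans : transitive ge_R by move=> x y z yx zy; exact: le_trans zy yx.
set st := sort_tuple ge_R [tuple v i | i < d].
have /tuple_permP[sg st_sg] : perm_eq st [tuple v i | i < d] by rewrite perm_sort.
exists (tnth st); split.
  by exists sg => i; rewrite (val_inj st_sg) !tnth_mktuple.
move=> i j ij; rewrite !(tnth_nth 0).
have st_sorted : sorted ge_R st by exact: sort_sorted.
apply: (sorted_leq_nth ge_trans (fun x => lexx x) 0 st_sorted);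
  by rewrite ?inE ?size_tuple.
Qed.

Variable w : 'I_d -> R.
Hypothesis hw : is_decr_rearr v w.

Lemma decr_rearr_head (m : R) (i : 'I_d) : is_max_of v m -> val i = 0%N -> w i = m.
Proof.
case: hw => [[sg w_sg] w_decr] [[i0 vi0] v_le] i_head.
apply/le_anti/andP; split; first by rewrite w_sg.
by rewrite -vi0 -[i0](permKV sg) -w_sg; apply: w_decr; rewrite i_head.
Qed.

Lemma decr_rearr_last (m : R) (i : 'I_d) : is_min_of v m -> val i = d.-1 -> w i = m.
Proof.
case: hw => [[sg w_sg] w_decr] [[i0 vi0] v_ge] il.
apply/le_anti/andP; split; last by rewrite w_sg.
rewrite -vi0 -[i0](permKV sg) -w_sg; apply: w_decr.
by rewrite il -ltnS prednK ?ltn_ord // (leq_ltn_trans _ (ltn_ord i)).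
Qed.

Lemma decr_rearr_three_values (i0 j0 : 'I_d) (a b c : R) :
  b < c < a -> v i0 = a -> v j0 = b -> (forall k, k != i0 -> k != j0 -> v k = c) ->
  forall i, w i = if val i == 0%N then a else if val i == d.-1 then b else c.
Proof.
move=> /andP[bc ca] vi0 vj0 v_mid.
have v_cases k : [\/ k = i0, k = j0 | v k = c].
  by case: (eqVneq k i0) => [|ki]; [constructor 1 | case: (eqVneq k j0) => [|kj];
    [constructor 2 | constructor 3; exact: v_mid]].
have eq_a k : v k = a -> k = i0.
  by case: (v_cases k) => // [-> | ->]; rewrite ?vj0 => h; exfalso; lra.
have eq_b k : v k = b -> k = j0.
  by case: (v_cases k) => // [-> | ->]; rewrite ?vi0 => h; exfalso; lra.
have max_a : is_max_of v a.
  by split=> [|k]; [exists i0 | case: (v_cases k) => [->|->|->]]; lra.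
have min_b : is_min_of v b.
  by split=> [|k]; [exists j0 | case: (v_cases k) => [->|->|->]]; lra.
case: (hw) => [[sg w_sg] _] i.
have d_pos : (0 < d)%N by apply: leq_ltn_trans (ltn_ord i).
have d_last : (d.-1 < d)%N by rewrite prednK.
case: ifP => [/eqP|i_n0]; first exact: decr_rearr_head.
case: ifP => [/eqP|i_nl]; first exact: decr_rearr_last.
have sg_head : sg (Ordinal d_pos) = i0.
  by apply: eq_a; rewrite -w_sg; exact: decr_rearr_head.
have sg_last : sg (Ordinal d_last) = j0.
  by apply: eq_b; rewrite -w_sg; exact: decr_rearr_last.
rewrite w_sg v_mid // -?sg_head -?sg_last (inj_eq (@perm_inj _ sg)) -val_eqE /=.
- by rewrite i_n0.
- by rewrite i_nl.
Qed.

End DecreasingRearrangement.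

Lemma sqrtrM_half (R : rcfType) (x y : R) : 0 <= x -> 0 < y ->
  Num.sqrt (x * y) = Num.sqrt 2 * y * Num.sqrt (x / (2 * y)).
Proof.
move=> x_ge0 y_gt0; rewrite -[y in _ * y * _]gtr0_norm // -sqrtr_sqr.
rewrite -sqrtrM // -sqrtrM ?mulr_ge0 ?sqr_ge0 ?ltW //.
by have -> : 2 * y ^+ 2 * (x / (2 * y)) = x * y by field; rewrite gt_eqF.
Qed.

Theorem lemmaS3 (R : rcfType) (d : nat) (hd : (2 <= d)%N) (v : 'I_d -> R)
  (hsum : \sum_(j < d) v j = 1) (hsq : \sum_(j < d) v j ^+ 2 = d%:R)
  (vmax vmin : R) (hmax : is_max_of v vmax) (hmin : is_min_of v vmin) :
  let dd := d%:R : R in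
  let bound := (dd - 1) / (Num.sqrt 2 * dd)
                 * Num.sqrt ((dd + 1) * (dd ^+ 2 + dd + 2)) - dd^-1 in
  let s := Num.sqrt ((dd + 1) / (2 * (dd ^+ 2 + dd + 2))) in
  ((dd - 1) * vmax - (dd + 1) * vmin) / 2 <= bound /\
  (((dd - 1) * vmax - (dd + 1) * vmin) / 2 = bound <->
   forall w : 'I_d -> R, is_decr_rearr v w ->
     forall i : 'I_d,
       w i = (if val i == 0%N then dd^-1 + (dd ^+ 2 - dd + 2) / dd * s
              else if val i == d.-1 then dd^-1 - (dd ^+ 2 + dd - 2) / dd * s
              else dd^-1 + 2 / dd * s)).
Proof.
move=> dd; set q := dd ^+ 2 + dd + 2; move=> bound s.
have dd_ge2 : 2 <= dd by rewrite (ler_nat R 2 d).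
have q_gt0 : 0 < q by rewrite /q; nra.
have s_gt0 : 0 < s by rewrite sqrtr_gt0 divr_gt0 //; lra.
have s_sqr : 2 * q * s ^+ 2 = dd + 1.
  by rewrite sqr_sqrtr ?divr_ge0 //; [field; rewrite gt_eqF | lra | lra].
have -> : bound = ((dd - 1) * s * q - 1) / dd.
  rewrite /bound sqrtrM_half -/s //; last lra.
  by field; rewrite !gt_eqF ?sqrtr_gt0 //; lra.
have [[i0 vi0] v_le] := hmax; have [[j0 vj0] v_ge] := hmin.
have ij : i0 != j0 by apply: (argmax_neq_argmin hd hsum hsq) => k; rewrite ?vi0 ?vj0.
split; first by rewrite -vi0 -vj0; exact: spread_le_bound.
split=> [eq_b w hw i | w_vals].
  rewrite -vi0 -vj0 in eq_b.
  have [vi0_eq vj0_eq v_mid] := spread_eq_bound hd hsum hsq s_sqr ij eq_b.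
  rewrite (decr_rearr_three_values hw _ vi0_eq vj0_eq v_mid).
    by rewrite /dd; case: ifP => _; [|case: ifP => _]; field; rewrite gt_eqF //; lra.
  by rewrite gtrBl ltrDl !mulr_gt0 //; lra.
have [w hw] := decr_rearr_exists v.
have d_pos : (0 < d)%N by apply: ltnW.
have d_last : (d.-1 < d)%N by rewrite prednK.
have := w_vals w hw (Ordinal d_pos); rewrite (decr_rearr_head hw hmax) //= => ->.
have := w_vals w hw (Ordinal d_last); rewrite (decr_rearr_last hw hmin) //=.
rewrite eqxx -subn1 subn_eq0 leqNgt hd /= => ->.
by rewrite /q /dd; field; rewrite gt_eqF //; lra.
Qed.
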